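(* Let $n_0,n_1,r$ be positive integers. If there exist integers $t$ and $l$ with $t\ge r$ and $0\le l\le t$ such that $$2^t e^{-\frac{(l)_r}{(t)_r}n_1}+2^t e^{-\frac{(t-l)_r}{(t)_r}n_0}\le 1,$$ then $ch(K_{n_0,n_1})>r$.
   Context: For an integer $a$ and a positive integer $r$, $(a)_r=a(a-1)\cdots(a-r+1)$ denotes the falling factorial. For a graph $G=(V,E)$, the choice number $ch(G)$ is the minimum integer $k$ such that for every assignment of a list $S(v)$ of at least $k$ colors to each vertex $v\in V$, there is a proper vertex coloring of $G$ assigning to each vertex $v$ a color from $S(v)$. $K_{n_0,n_1}$ denotes the complete bipartite graph with parts of sizes $n_0$ and $n_1$. *)

From Stdlib Require Import Reals.
From mathcomp Require Import all_boot.
Set Implicit Arguments. Unset Strict Implicit. Unset Printing Implicit Defensive.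

(* A (simple) graph is given by a symmetric irreflexive relation [e] on a finite
   vertex type [T]. Colors are natural numbers; a list assignment gives each
   vertex a finite list of colors [S v]; its number of colors is the number of
   distinct entries, [size (undup (S v))]. *)

Definition proper_list_coloring (T : finType) (e : rel T)
  (S : T -> seq nat) (c : T -> nat) : Prop :=
  (forall v, c v \in S v) /\ (forall u v, e u v -> c u != c v).

Definition choosable (T : finType) (e : rel T) (k : nat) : Prop :=
  forall S : T -> seq nat, (forall v, k <= size (undup (S v))) ->
    exists c : T -> nat, proper_list_coloring e S c.

(* ch(G) > r : the minimum k such that G is k-choosable exceeds r,
   i.e. every k for which G is k-choosable satisfies k > r. *)
Definition choice_number_gt (T : finType) (e : rel T) (r : nat) : Prop :=
  forall k, choosable e k -> r < k.

Definition Kbip_rel (n0 n1 : nat) : rel ('I_n0 + 'I_n1)%type :=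
  fun u v => match u, v with
             | inl _, inr _ | inr _, inl _ => true
             | _, _ => false
             end.

From Stdlib Require Import Reals Lra.
From mathcomp Require Import all_boot.
Set Implicit Arguments. Unset Strict Implicit. Unset Printing Implicit Defensive.

(* Draw every list of K_{n0,n1} among the r-subsets of t colors. A proper
   coloring from the lists yields the set A of colors used on side 0: every
   side-0 list meets A and every side-1 list meets its complement. For |A| = a
   the fraction of list systems separated in this way by A is
   (1 - C(t-a,r)/C(t,r))^n0 (1 - C(a,r)/C(t,r))^n1. As C(a,r)/C(t,r) = (a)_r/(t)_r
   and 1 - x <= e^-x, comparing a with l bounds this fraction by one of the two
   exponentials of the hypothesis, hence by less than 2^-t. So the union bound
   over the 2^t sets A leaves a system of lists of size r that no A separates,
   i.e. that admits no coloring. *)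

Lemma card_bigcup_le (I X : finType) (F : I -> {set X}) :
  #|\bigcup_i F i| <= \sum_i #|F i|.
Proof.
elim/big_rec2: _ => [|i n U _ IH]; first by rewrite cards0.
exact: leq_trans (leq_card_setU _ _).1 (leq_add (leqnn _) IH).
Qed.

Lemma sum_lt_of_uniform_bound (I : finType) (i0 : I) (a : I -> nat) N :
  (forall i, a i * #|I| < N) -> \sum_i a i < N.
Proof.
move=> a_small; have I_gt0 : 0 < #|I| by apply/card_gt0P; exists i0.
have N_gt0 : 0 < N by apply: leq_ltn_trans (a_small i0).
rewrite -(ltn_pmul2r I_gt0) big_distrl /=.
apply: (@leq_ltn_trans (\sum_(i : I) N.-1)).
  by apply: leq_sum => i _; rewrite -ltnS prednK // a_small.
by rewrite sum_nat_const mulnC ltn_pmul2r // ltn_predL.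
Qed.

Lemma exists_outside_bigcup (I X : finType) (i0 : I) (U : {set X}) (F : I -> {set X}) :
  (forall i, #|F i| * #|I| < #|U|) -> exists2 x, x \in U & forall i, x \notin F i.
Proof.
move=> F_small.
have bigcup_lt : #|\bigcup_i F i| < #|U|.
  exact: leq_ltn_trans (card_bigcup_le F) (sum_lt_of_uniform_bound i0 F_small).
have /subsetPn[x xU x_uncovered] : ~~ (U \subset \bigcup_i F i).
  by apply: contraTN bigcup_lt => /subset_leq_card; rewrite leqNgt.
by exists x => // i; apply: contra x_uncovered => xF; apply/bigcupP; exists i.
Qed.

Section ListSystems.

Variables (T I0 I1 : finType) (r : nat).

Definition rsubsets := [set S : {set T} | #|S| == r].

Definition rsubsets_not_within (B : {set T}) := [set S in rsubsets | ~~ (S \subset B)].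

Definition list_systems : {set {ffun I0 -> {set T}} * {ffun I1 -> {set T}}} :=
  setX [set L in ffun_on rsubsets] [set L in ffun_on rsubsets].

Definition separated_by (A : {set T}) : {set {ffun I0 -> {set T}} * {ffun I1 -> {set T}}} :=
  setX [set L in ffun_on (rsubsets_not_within (~: A))]
       [set L in ffun_on (rsubsets_not_within A)].

Lemma card_rsubsets : #|rsubsets| = 'C(#|T|, r).
Proof. exact: card_draws. Qed.

Lemma card_rsubsets_not_within B : #|rsubsets_not_within B| = 'C(#|T|, r) - 'C(#|B|, r).
Proof.
have within_sub : [set S : {set T} | S \subset B & #|S| == r] \subset rsubsets.
  by apply/subsetP => S; rewrite !inE => /andP[].
rewrite -card_rsubsets -cards_draws -(cardsDS within_sub).
by apply: eq_card => S; rewrite !inE; case: (S \subset B); case: (_ == r).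
Qed.

Lemma card_list_systems : #|list_systems| = 'C(#|T|, r) ^ #|I0| * 'C(#|T|, r) ^ #|I1|.
Proof. by rewrite cardsX !cardsE !card_ffun_on card_rsubsets. Qed.

Lemma card_separated_by A : #|separated_by A| =
  ('C(#|T|, r) - 'C(#|T| - #|A|, r)) ^ #|I0| * ('C(#|T|, r) - 'C(#|A|, r)) ^ #|I1|.
Proof.
by rewrite cardsX !cardsE !card_ffun_on !card_rsubsets_not_within [#|~: A|]cardsCs setCK.
Qed.

End ListSystems.

Section BipartiteLists.

Variables (n0 n1 t r : nat).

Definition colors_of (S : {set 'I_t}) : seq nat := [seq val x | x in S].

Lemma size_undup_colors_of S : size (undup (colors_of S)) = #|S|.
Proof. by rewrite undup_id ?(map_inj_uniq val_inj) ?enum_uniq // size_map cardE. Qed.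

Definition bip_lists (L : {ffun 'I_n0 -> {set 'I_t}} * {ffun 'I_n1 -> {set 'I_t}})
    (v : 'I_n0 + 'I_n1) : seq nat :=
  match v with inl i => colors_of (L.1 i) | inr j => colors_of (L.2 j) end.

Lemma size_undup_bip_lists L v :
  L \in list_systems 'I_t 'I_n0 'I_n1 r -> size (undup (bip_lists L v)) = r.
Proof.
rewrite !inE => /andP[/ffun_onP L0r /ffun_onP L1r].
by case: v => [i|j]; rewrite size_undup_colors_of; apply/eqP;
  [have := L0r i | have := L1r j]; rewrite inE.
Qed.

Lemma separated_of_coloring L c :
  L \in list_systems 'I_t 'I_n0 'I_n1 r ->
  proper_list_coloring (@Kbip_rel n0 n1) (bip_lists L) c ->
  exists A, L \in separated_by 'I_n0 'I_n1 r A.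
Proof.
rewrite !inE => /andP[/ffun_onP L0r /ffun_onP L1r] [c_in_lists c_proper].
exists [set x : 'I_t | [exists i, c (inl i) == val x]].
rewrite !inE; apply/andP; split; apply/ffun_onP.
- move=> i; rewrite inE L0r /=.
  have /mapP[x] := c_in_lists (inl i); rewrite mem_enum => x_in c_x.
  apply/subsetPn; exists x; rewrite // !inE negbK.
  by apply/existsP; exists i; rewrite c_x.
- move=> j; rewrite inE L1r /=.
  have /mapP[x] := c_in_lists (inr j); rewrite mem_enum => x_in c_x.
  apply/subsetPn; exists x; rewrite // inE.
  apply/existsP => -[i /eqP c_i].
  by have := c_proper (inl i) (inr j) erefl; rewrite c_i c_x eqxx.
Qed.

End BipartiteLists.

Section ExponentialBounds.

Local Open Scope R_scope.

Lemma INR_expn m n : INR (m ^ n)%N = INR m ^ n.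
Proof. by elim: n => [|n IHn]; rewrite ?expn0 // expnS mult_INR IHn. Qed.

Lemma one_sub_pow_le_exp x n : x <= 1 -> (1 - x) ^ n <= exp (- (x * INR n)).
Proof.
move=> x_le1; elim: n => [|n IHn]; first by rewrite /= Rmult_0_r Ropp_0 exp_0; lra.
have -> : - (x * INR n.+1) = - x + - (x * INR n) by rewrite S_INR; ring.
rewrite exp_plus /=; apply: Rmult_le_compat => //; [lra | apply: pow_le; lra |].
by have := exp_ineq1_le (- x); lra.
Qed.

Lemma sub_pow_le_exp (N c : nat) q n : (0 < N)%N -> (c <= N)%N -> q <= INR c / INR N ->
  INR (N - c) ^ n <= INR N ^ n * exp (- (q * INR n)).
Proof.
move=> /ltP/lt_0_INR N_gt0 /leP c_le_N q_le.
have INR_c_le : INR c <= INR N by apply: le_INR.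
have ratio_le1 : INR c / INR N <= 1.
  by apply: (Rmult_le_reg_r (INR N)) => //; field_simplify; lra.
have -> : INR (N - c) = INR N * (1 - INR c / INR N) by rewrite minus_INR //; field; lra.
rewrite Rpow_mult_distr; apply: Rmult_le_compat_l; first exact/pow_le/pos_INR.
apply: Rle_trans (one_sub_pow_le_exp n (Rle_trans _ _ _ q_le ratio_le1)).
apply: pow_incr; lra.
Qed.

Lemma ffact_ratio_le_bin_ratio (t r l a : nat) : (r <= t)%N -> (l <= a)%N ->
  INR (l ^_ r) / INR (t ^_ r) <= INR 'C(a, r) / INR 'C(t, r).
Proof.
move=> r_le_t l_le_a.
have fact_gt0 : 0 < INR r`! by apply/lt_0_INR/ltP; rewrite fact_gt0.
have bin_gt0 : 0 < INR 'C(t, r) by apply/lt_0_INR/ltP; rewrite bin_gt0.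
rewrite -!bin_ffact !mult_INR.
have -> : INR 'C(l, r) * INR r`! / (INR 'C(t, r) * INR r`!) = INR 'C(l, r) / INR 'C(t, r).
  by field; lra.
apply: Rmult_le_compat_r; first exact/Rlt_le/Rinv_0_lt_compat.
exact/le_INR/leP/leq_bin2l.
Qed.

Lemma bin_sub_pow_le_exp (t r l a n : nat) : (r <= t)%N -> (l <= a <= t)%N ->
  INR ('C(t, r) - 'C(a, r)) ^ n <=
  INR 'C(t, r) ^ n * exp (- (INR (l ^_ r) / INR (t ^_ r) * INR n)).
Proof.
move=> r_le_t /andP[l_le_a a_le_t].
apply: sub_pow_le_exp; [by rewrite bin_gt0 | exact: leq_bin2l | exact: ffact_ratio_le_bin_ratio].
Qed.

Lemma mul_lt_of_le_scaled (x0 x1 y0 y1 e p : R) : 0 <= x0 <= y0 -> 0 <= x1 <= y1 * e ->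
  0 < y0 * y1 -> 0 < p -> p * e < 1 -> x0 * x1 * p < y0 * y1.
Proof.
move=> x0_bd x1_bd y_gt0 p_gt0 pe_lt1.
have x_le : x0 * x1 <= y0 * (y1 * e) by apply: Rmult_le_compat; lra.
nra.
Qed.

Lemma separated_count_lt (n0 n1 r t l a : nat) : (r <= t)%N -> (l <= t)%N -> (a <= t)%N ->
  INR 2 ^ t * exp (- (INR (l ^_ r) / INR (t ^_ r) * INR n1)) +
  INR 2 ^ t * exp (- (INR ((t - l) ^_ r) / INR (t ^_ r) * INR n0)) <= 1 ->
  (('C(t, r) - 'C(t - a, r)) ^ n0 * ('C(t, r) - 'C(a, r)) ^ n1 * 2 ^ t
     < 'C(t, r) ^ n0 * 'C(t, r) ^ n1)%N.
Proof.
move=> r_le_t l_le_t a_le_t bound.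
apply/ltP/INR_lt; rewrite !mult_INR !INR_expn.
set N := INR 'C(t, r); set P := INR 2 ^ t in bound *.
set E1 := exp _ in bound; set E0 := exp _ in bound.
have N_gt0 : 0 < N by apply/lt_0_INR/ltP; rewrite bin_gt0.
have sub_bd c n : 0 <= INR ('C(t, r) - c) ^ n <= N ^ n.
  split; first exact/pow_le/pos_INR.
  by apply: pow_incr; split; [exact: pos_INR | exact/le_INR/leP/leq_subr].
have Y_gt0 : 0 < N ^ n0 * N ^ n1 by apply: Rmult_lt_0_compat; exact: pow_lt.
have P_gt0 : 0 < P by apply/pow_lt/lt_0_INR/ltP.
have PE1_gt0 : 0 < P * E1 by apply: Rmult_lt_0_compat; [|exact: exp_pos].
have PE0_gt0 : 0 < P * E0 by apply: Rmult_lt_0_compat; [|exact: exp_pos].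
case: (leqP l a) => [l_le_a | a_lt_l].
- apply: (mul_lt_of_le_scaled (e := E1) (sub_bd _ _) _ Y_gt0 P_gt0); last by lra.
  split; first exact/pow_le/pos_INR.
  by apply: (@bin_sub_pow_le_exp t r l a n1 r_le_t); rewrite l_le_a.
- rewrite (Rmult_comm (INR ('C(t, r) - 'C(t - a, r)) ^ n0)) (Rmult_comm (N ^ n0)).
  apply: (mul_lt_of_le_scaled (e := E0) (sub_bd _ _) _ _ P_gt0); last by lra.
    split; first exact/pow_le/pos_INR.
    apply: (@bin_sub_pow_le_exp t r (t - l) (t - a) n0 r_le_t).
    by rewrite leq_subr andbT leq_sub2l // ltnW.
  by apply: Rmult_lt_0_compat; exact: pow_lt.
Qed.

End ExponentialBounds.

Theorem lemma3p1 (n0 n1 r : nat) :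
  (0 < n0)%N -> (0 < n1)%N -> (0 < r)%N ->
  (exists t l : nat, (r <= t)%N /\ (l <= t)%N /\
     Rle (Rplus (Rmult (pow (INR 2) t)
                       (exp (Ropp (Rmult (Rdiv (INR (l ^_ r)) (INR (t ^_ r))) (INR n1)))))
                (Rmult (pow (INR 2) t)
                       (exp (Ropp (Rmult (Rdiv (INR ((t - l) ^_ r)) (INR (t ^_ r))) (INR n0))))))
         R1) ->
  choice_number_gt (@Kbip_rel n0 n1) r.
Proof.
move=> _ _ _ [t [l [r_le_t [l_le_t bound]]]] k k_choosable.
rewrite ltnNge; apply/negP => k_le_r.
have [L L_sys L_unseparated] : exists2 L, L \in list_systems 'I_t 'I_n0 'I_n1 r &
    forall A, L \notin separated_by 'I_n0 'I_n1 r A.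
  have card_sets : #|{set 'I_t}| = 2 ^ t.
    by rewrite -cardsT -powersetT card_powerset cardsT card_ord.
  apply: (exists_outside_bigcup set0) => A.
  rewrite card_separated_by card_list_systems card_sets !card_ord.
  by apply: separated_count_lt bound => //; have := max_card A; rewrite card_ord.
have lists_large v : k <= size (undup (bip_lists L v)).
  by rewrite (size_undup_bip_lists v L_sys).
have [c c_coloring] := k_choosable _ lists_large.
have [A L_sep] := separated_of_coloring L_sys c_coloring.
by have := L_unseparated A; rewrite L_sep.
Qed.
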